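(* Consider the (unscaled) HILT model on $N$ nodes with weight $\gamma=\Gamma/(N-1)$, $\Gamma\in(0,1]$, and i.i.d. thresholds $\Theta_1,\dots,\Theta_N$ with continuous c.d.f. $F$ satisfying $F(0)=0$. Let $\mathcal A(0)$ be a fixed nonempty initial set of destinations, $\mathcal D(0)=\mathcal A(0)$, $\mathcal B(0)=\emptyset$, and for $k\ge0$ let $\mathcal A(k+1)=\mathcal A(k)\cup\{i\notin\mathcal A(k):\gamma|\mathcal A(k)|\ge\Theta_i\}$, $\mathcal D(k+1)=\mathcal A(k+1)\setminus\mathcal A(k)$, $\mathcal B(k+1)=\mathcal A(k)$. Let $B(k)=|\mathcal B(k)|$, $D(k)=|\mathcal D(k)|$. Then $(B(k),D(k))_{k\ge0}$ is a discrete-time Markov chain: $B(k+1)=B(k)+D(k)$, and for every $k\ge0$ and every history with positive probability ending in $(B(k),D(k))=(j,m)$ with $F(\gamma j)<1$, $$\mathbb{P}\big(D(k+1)=\ell\,\big|\,(B(0),D(0)),\dots,(B(k),D(k))\big)=\binom{N-j-m}{\ell}p^\ell(1-p)^{N-j-m-\ell},\quad p=\frac{F(\gamma(j+m))-F(\gamma j)}{1-F(\gamma j)}.$$ *)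

From HB Require Import structures.
From mathcomp Require Import all_boot all_order all_algebra.
From mathcomp Require Import all_classical all_reals all_analysis.
Set Implicit Arguments. Unset Strict Implicit. Unset Printing Implicit Defensive.
Import Order.TTheory GRing.Theory Num.Theory.
Import numFieldNormedType.Exports.
Local Open Scope classical_set_scope.
Local Open Scope ring_scope.

Section HILT.
Context {d : measure_display} {T : measurableType d} {R : realType}.

Definition mutually_independent (P : probability T R) (I : finType)
  (X : I -> T -> R) : Prop :=
  forall (S : {set I}) (Bs : I -> set R),
    (forall i, measurable (Bs i)) ->
    P (\bigcap_(i in [set i | i \in S]) (X i @^-1` Bs i)) =
    (\prod_(i in S) P (X i @^-1` Bs i))%E.

Definition cond_prob (P : probability T R) (E H : set T) : R :=
  fine (P (E `&` H)) / fine (P H).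

Variables (N : nat) (gamma : R) (Theta : 'I_N -> T -> R) (A0 : {set 'I_N}).

Fixpoint Aset (k : nat) (w : T) : {set 'I_N} :=
  match k with
  | 0 => A0
  | k'.+1 => let a := Aset k' w in
      a :|: [set i | (i \notin a) && (Theta i w <= gamma * (#|a|%:R))]
  end.

Definition Bset (k : nat) (w : T) : {set 'I_N} :=
  match k with 0 => finset.set0 | k'.+1 => Aset k' w end.

Definition Dset (k : nat) (w : T) : {set 'I_N} :=
  match k with 0 => A0 | k'.+1 => Aset k'.+1 w :\: Aset k' w end.

Definition Bcard (k : nat) (w : T) : nat := #|Bset k w|.
Definition Dcard (k : nat) (w : T) : nat := #|Dset k w|.

Definition history_event (k : nat) (h : nat -> nat * nat) : set T :=
  [set w | forall i, (i <= k)%N -> (Bcard i w, Dcard i w) = h i].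

End HILT.

From HB Require Import structures.
From mathcomp Require Import all_boot all_order all_algebra.
From mathcomp Require Import all_classical all_reals all_analysis.
From mathcomp Require Import ring.
Set Implicit Arguments. Unset Strict Implicit. Unset Printing Implicit Defensive.
Import Order.TTheory GRing.Theory Num.Theory.
Import numFieldNormedType.Exports.
Local Open Scope classical_set_scope.
Local Open Scope ring_scope.

(* Fix the whole path A(0), ..., A(k).  The event that the process follows it is
   a product over nodes of conditions on their own thresholds, so by independence
   the thresholds stay independent given the path.  A node outside A(k) has been
   passed over at every level up to gamma B(k), i.e. its threshold exceeds
   gamma j, and it joins at step k+1 iff its threshold is at most gamma (j+m);
   so D(k+1) is binomial with N-j-m trials and success probability p.  This law
   depends on the path only through (j, m), hence it survives summation over the
   paths compatible with the observed history of (B, D). *)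

Section FinitePartition.
Context {d : measure_display} {T : measurableType d} {R : realType}.

Lemma cover_bigsetU {I : finType} {Y : I -> set T} (X : set T) :
  (forall w, exists i, Y i w) -> X = \big[setU/set0]_(i <- enum I) (X `&` Y i).
Proof.
move=> coverY; rewrite -bigcup_seq; apply/seteqP; split=> [w Xw | w [i _ []] //].
by have [i Yi] := coverY w; exists i; rewrite //= mem_enum.
Qed.

Lemma measurable_partition {I : finType} {Y : I -> set T} {X : set T} :
  (forall w, exists i, Y i w) -> (forall i, measurable (X `&` Y i)) -> measurable X.
Proof.
by move=> coverY mXY; rewrite (cover_bigsetU X coverY); apply: bigsetU_measurable.
Qed.

Variable P : probability T R.

Lemma measure_big_setU_seq (I : choiceType) (s : seq I) (Z : I -> set T) :
  uniq s -> (forall i, measurable (Z i)) ->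
  (forall i j, i != j -> Z i `&` Z j = set0) ->
  P (\big[setU/set0]_(i <- s) Z i) = (\sum_(i <- s) P (Z i))%E.
Proof.
move=> + mZ disjZ; elim: s => [|i s IHs] /=; first by rewrite !big_nil measure0.
case/andP=> is_ s_uniq; rewrite !big_cons measureU //.
- by congr (_ + _)%E; apply: IHs.
- by apply: bigsetU_measurable.
- rewrite -bigcup_seq; apply/seteqP; split=> // w [Zi [j /= js Zj]].
  have ij : i != j by apply: contraNneq is_ => ->.
  by have /seteqP[/(_ w) + _] := disjZ _ _ ij; apply.
Qed.

Lemma measure_partition {I : finType} {Y : I -> set T} {X : set T} :
  (forall i j, i != j -> Y i `&` Y j = set0) -> (forall w, exists i, Y i w) ->
  (forall i, measurable (X `&` Y i)) ->
  P X = (\sum_i P (X `&` Y i))%E.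
Proof.
move=> disjY coverY mXY.
rewrite {1}(cover_bigsetU X coverY) measure_big_setU_seq ?enum_uniq ?big_enum //.
by move=> i j ij; rewrite setIACA -setIA (disjY _ _ ij) !setI0.
Qed.

Lemma cond_prob_partition (I : finType) (Y : I -> set T) (E H : set T) (c : R) :
  (forall i j, i != j -> Y i `&` Y j = set0) -> (forall w, exists i, Y i w) ->
  (forall i, measurable (H `&` Y i)) -> (forall i, measurable (E `&` H `&` Y i)) ->
  (forall i, P (E `&` H `&` Y i) = (c%:E * P (H `&` Y i))%E) ->
  (0 < P H)%E -> cond_prob P E H = c.
Proof.
move=> disjY coverY mHY mEHY EHY PH_gt0.
have PEHE := measure_partition disjY coverY mEHY.
have PHE := measure_partition disjY coverY mHY.
have mH := measurable_partition coverY mHY.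
have PH_fin : P H \is a fin_num by rewrite fin_num_measure.
rewrite /cond_prob PEHE; under eq_bigr do rewrite EHY.
rewrite -ge0_sume_distrr -?PHE //.
by rewrite fineM // mulfK // gt_eqF // -lte_fin fineK.
Qed.

End FinitePartition.

Section IndependentBoxes.
Context {d : measure_display} {T : measurableType d} {R : realType}.
Variables (P : probability T R) (I : finType) (X : I -> T -> R).
Hypothesis mX : forall i, measurable_fun setT (X i).
Hypothesis indepX : mutually_independent P X.

Definition box (U : I -> set R) : set T := [set w | forall i, U i (X i w)].

Lemma measurable_preimage i {U : set R} : measurable U -> measurable (X i @^-1` U).
Proof. by move=> mU; rewrite -[X i @^-1` U]setTI; apply: mX. Qed.

Lemma boxE U : box U = \bigcap_(i in [set i | i \in [set: I]%SET]) (X i @^-1` U i).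
Proof. by apply/seteqP; split=> [w Uw i _ | w Uw i]; [|apply: Uw; rewrite /= inE]. Qed.

Lemma measurable_box U : (forall i, measurable (U i)) -> measurable (box U).
Proof.
move=> mU; rewrite boxE; apply: fin_bigcap_measurable; first exact: finite_finset.
by move=> i _; apply: measurable_preimage.
Qed.

Lemma prob_box U : (forall i, measurable (U i)) ->
  fine (P (box U)) = \prod_i fine (P (X i @^-1` U i)).
Proof.
move=> mU; have PE i : P (X i @^-1` U i) = (fine (P (X i @^-1` U i)))%:E.
  by rewrite fineK // fin_num_measure //; apply: measurable_preimage.
rewrite boxE indepX // (eq_bigr _ (fun i _ => PE i)) prodEFin /=.
by apply: eq_bigl => i; rewrite inE.
Qed.

Lemma prob_preimage_split i (U V : set R) : measurable U -> measurable V ->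
  fine (P (X i @^-1` U)) =
  fine (P (X i @^-1` (U `&` V))) + fine (P (X i @^-1` (U `&` ~` V))).
Proof.
move=> mU mV.
have mXU := measurable_preimage i mU; have mXV := measurable_preimage i mV.
rewrite (measureDI P mXU mXV) fineD ?fin_num_measure //.
- by rewrite addrC setDE !preimage_setI preimage_setC.
- exact: measurableD.
- exact: measurableI.
Qed.

End IndependentBoxes.

Lemma binomial_pmfE {R : realType} n (p : R) l :
  binomial_pmf n p l = 'C(n, l)%:R * p ^+ l * (1 - p) ^+ (n - l).
Proof. by rewrite /binomial_pmf -mulr_natl mulrA. Qed.

Section BinomialCount.
Context {d : measure_display} {T : measurableType d} {R : realType}.
Variables (P : probability T R) (I : finType) (X : I -> T -> R).
Hypothesis mX : forall i, measurable_fun setT (X i).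
Hypothesis indepX : mutually_independent P X.
Variables (U : I -> set R) (V : set R) (C : {set I}) (p q : R) (l : nat).
Hypothesis mU : forall i, measurable (U i).
Hypothesis mV : measurable V.
Hypothesis probUV : forall i, i \in C -> fine (P (X i @^-1` (U i `&` V))) = p * q.
Hypothesis probUnV : forall i, i \in C -> fine (P (X i @^-1` (U i `&` ~` V))) = (1 - p) * q.

Let hits w : {set I} := [set i in C | X i w \in V].

Let boxS (S : {set I}) i : set R :=
  if i \in S then U i `&` V else if i \in C then U i `&` ~` V else U i.

Let outside := \prod_(i in ~: C) fine (P (X i @^-1` U i)).

Let measurable_boxS S i : measurable (boxS S i).
Proof.
rewrite /boxS; case: ifP => _; [|case: ifP => _] => //; apply: measurableI => //.
exact: measurableC.
Qed.

Let hits_boxS (S : {set I}) w : S \subset C -> box X (boxS S) w -> hits w = S.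
Proof.
move=> SC Sw; apply/setP => i; rewrite inE; have := Sw i; rewrite /boxS.
case: ifP => iS; first by case=> _ Vi; rewrite (fintype.subsetP SC) //= mem_set.
by case: ifP => //= _ [_ nVi]; rewrite memNset.
Qed.

Let boxS_sub (S : {set I}) : box X (boxS S) `<=` box X U.
Proof.
move=> w Sw i; have := Sw i; rewrite /boxS.
by case: ifP => _; [case | case: ifP => _ //; case].
Qed.

Let box_hitsE (S : {set I}) :
  box X U `&` [set w | #|hits w| = l] `&` [set w | hits w = S] =
  if (S \subset C) && (#|S| == l) then box X (boxS S) else set0.
Proof.
case: ifP => [/andP[SC /eqP Sl] | Sbad]; apply/seteqP; split=> w //.
- move=> [[Uw _] <-] i; rewrite /boxS inE; have := Uw i.
  case: (boolP (i \in C)) => iC; case: (boolP (X i w \in V)) => Vi Ui //=.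
    by split=> //; apply: set_mem.
  by split=> // /mem_set; apply/negP.
- move=> Sw; have hitsS := hits_boxS SC Sw.
  by split; [split; [exact: boxS_sub | rewrite /= hitsS] | ].
- move=> [[_ hits_l] hitsS]; move: Sbad; rewrite -hitsS hits_l eqxx andbT.
  suff -> : hits w \subset C by [].
  by apply/fintype.subsetP => i; rewrite inE => /andP[].
Qed.

Let prob_boxS (S : {set I}) : S \subset C ->
  fine (P (box X (boxS S))) = (p * q) ^+ #|S| * ((1 - p) * q) ^+ (#|C| - #|S|) * outside.
Proof.
move=> SC; rewrite prob_box // (bigID (mem C)) /= (big_setID S) /= (finset.setIidPr SC).
congr (_ * _ * _).
- rewrite -prodr_const; apply: eq_bigr => i iS.
  by rewrite /boxS iS probUV // (fintype.subsetP SC).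
- have -> : (#|C| - #|S|)%N = #|C :\: S| by rewrite cardsD (finset.setIidPr SC).
  rewrite -prodr_const; apply: eq_bigr => i; rewrite inE => /andP[iNS iC].
  by rewrite /boxS (negbTE iNS) iC probUnV.
- rewrite /outside; apply: eq_big => [i | i iNC]; first by rewrite inE.
  suff iNS : i \notin S by rewrite /boxS (negbTE iNS) (negbTE iNC).
  by apply: contra iNC; apply: (fintype.subsetP SC).
Qed.

Let prob_boxU : fine (P (box X U)) = q ^+ #|C| * outside.
Proof.
rewrite prob_box // (bigID (mem C)) /= -prodr_const; congr (_ * _).
  apply: eq_bigr => i iC; rewrite (prob_preimage_split P mX i (mU i) mV).
  by rewrite probUV // probUnV // -mulrDl addrC subrK mul1r.
by rewrite /outside; apply: eq_bigl => i; rewrite inE.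
Qed.

Let hits_disj (S S' : {set I}) : S != S' ->
  [set w | hits w = S] `&` [set w | hits w = S'] = set0.
Proof. by move=> SS'; apply/seteqP; split=> // w [/= -> SE]; rewrite SE eqxx in SS'. Qed.

Let hits_cover w : exists S, [set w | hits w = S] w.
Proof. by exists (hits w). Qed.

Let measurable_piece S :
  measurable (box X U `&` [set w | #|hits w| = l] `&` [set w | hits w = S]).
Proof. by rewrite box_hitsE; case: ifP => _ //; apply: measurable_box => // i. Qed.

Lemma measurable_box_hits :
  measurable (box X U `&` [set w | #|[set i in C | X i w \in V]| = l]).
Proof. exact: measurable_partition hits_cover measurable_piece. Qed.

Lemma prob_box_hits_binomial :
  P (box X U `&` [set w | #|[set i in C | X i w \in V]| = l]) =
  ((binomial_pmf #|C| p l)%:E * P (box X U))%E.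
Proof.
rewrite (measure_partition P hits_disj hits_cover measurable_piece).
have prob_piece S : P (box X U `&` [set w | #|hits w| = l] `&` [set w | hits w = S]) =
    (if (S \subset C) && (#|S| == l)
     then (p * q) ^+ l * ((1 - p) * q) ^+ (#|C| - l) * outside else 0)%:E.
  rewrite box_hitsE; case: ifP => [/andP[SC /eqP <-] | _]; last by rewrite measure0.
  by rewrite -prob_boxS // fineK // fin_num_measure //; apply: measurable_box.
under eq_bigr do rewrite prob_piece.
have PU_fin : P (box X U) \is a fin_num by rewrite fin_num_measure //; apply: measurable_box.
rewrite sumEFin -big_mkcond /= -[P (box X U)]fineK // -EFinM; congr EFin.
rewrite (eq_bigl (fun S => S \in [set S : {set I} | (S \subset C) && (#|S| == l)]%SET));
  last by move=> S; rewrite inE.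
rewrite sumr_const cards_draws prob_boxU binomial_pmfE -mulr_natl.
have [lC | Cl] := leqP l #|C|; last by rewrite bin_small // !mul0r.
have -> : q ^+ #|C| = q ^+ l * q ^+ (#|C| - l) by rewrite -exprD subnKC.
by rewrite !exprMn; ring.
Qed.

End BinomialCount.
Section Cascade.
Context {d : measure_display} {T : measurableType d} {R : realType}.
Variables (P : probability T R) (N : nat) (gamma : R).
Variables (Theta : 'I_N -> T -> R) (A0 : {set 'I_N}).
Local Notation A := (Aset gamma Theta A0).
Local Notation B := (Bcard gamma Theta A0).
Local Notation D := (Dcard gamma Theta A0).

Lemma in_AsetS k w n :
  (n \in A k.+1 w) = (n \in A k w) || (Theta n w <= gamma * #|A k w|%:R).
Proof. by rewrite /= !inE; case: (n \in A k w). Qed.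

Lemma Aset_subS k w : A k w \subset A k.+1 w.
Proof. exact: finset.subsetUl. Qed.

Lemma Aset_mono w i j : (i <= j)%N -> A i w \subset A j w.
Proof.
elim: j => [|j IHj]; first by rewrite leqn0 => /eqP ->.
rewrite leq_eqVlt => /predU1P[-> // | /IHj ij].
exact: fintype.subset_trans ij (Aset_subS j w).
Qed.

Lemma card_Aset k w : #|A k w| = (B k w + D k w)%N.
Proof.
case: k => [|k]; first by rewrite /Bcard /Dcard /= cards0.
rewrite /Bcard /Dcard /= cardsD (finset.setIidPr (Aset_subS k w)).
by rewrite subnKC ?subset_leq_card ?Aset_subS.
Qed.

Lemma Dcard_succ k w : D k.+1 w =
  #|[set n in ~: A k w | Theta n w \in [set x | x <= gamma * #|A k w|%:R]]|.
Proof.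
rewrite /Dcard; change (Dset _ _ _ k.+1 w) with (A k.+1 w :\: A k w).
apply: eq_card => n; rewrite finset.in_setD in_AsetS !inE.
by case: (n \in A k w) => //=; apply/idP/idP => [/mem_set | /set_mem].
Qed.

Hypothesis gamma_ge0 : 0 <= gamma.

Definition above_levels k w : set R :=
  [set x | forall i, (i < k)%N -> gamma * #|A i w|%:R < x].

Lemma above_levels0 w : above_levels 0 w = setT.
Proof. by apply/seteqP; split=> // x _ i. Qed.

Lemma above_levelsS k w : above_levels k.+1 w = ~` [set x | x <= gamma * #|A k w|%:R].
Proof.
apply/seteqP; split=> x /=.
  by move=> /(_ k (ltnSn k)); rewrite ltNge => /negP.
move=> /negP; rewrite -ltNge => lt_x i ik.
apply: le_lt_trans lt_x; rewrite ler_wpM2l // ler_nat.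
exact/subset_leq_card/Aset_mono.
Qed.

Variable F : R -> R.
Hypothesis mTheta : forall n, measurable_fun setT (Theta n).
Hypothesis indepTheta : mutually_independent P Theta.
Hypothesis distF : forall n (x : R), P [set w | Theta n w <= x] = (F x)%:E.
Hypothesis F0 : F 0 = 0.

Let measurable_le (x : R) : measurable [set y : R | y <= x].
Proof.
have -> : [set y : R | y <= x] = [set` `]-oo, x]].
  by apply/seteqP; split=> y; rewrite /= in_itv.
exact: measurable_itv.
Qed.

Lemma prob_Theta_le n x : fine (P (Theta n @^-1` [set y | y <= x])) = F x.
Proof. by rewrite [P _]distF. Qed.

Lemma prob_Theta_gt n x : fine (P (Theta n @^-1` ~` [set y | y <= x])) = 1 - F x.
Proof.
rewrite -preimage_setC probability_setC; last exact: measurable_preimage.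
by rewrite [P _]distF.
Qed.

(* For k = 0 no level has been passed yet and B(0) = 0, so this needs F 0 = 0. *)
Lemma prob_above_levels_le n k w L : gamma * (B k w)%:R <= L ->
  fine (P (Theta n @^-1` (above_levels k w `&` [set y | y <= L]))) =
  F L - F (gamma * (B k w)%:R).
Proof.
case: k => [|k] le_L.
  by rewrite above_levels0 setTI prob_Theta_le /Bcard /= cards0 mulr0 F0 subr0.
have := prob_preimage_split P mTheta n (measurable_le L)
  (measurable_le (gamma * #|A k w|%:R)).
have -> : [set y | y <= L] `&` [set y | y <= gamma * #|A k w|%:R] =
    [set y | y <= gamma * #|A k w|%:R].
  by apply/seteqP; split=> [y [] // | y /= le_y]; split=> //; apply: le_trans le_y le_L.
by rewrite above_levelsS setIC !prob_Theta_le => ->; rewrite /Bcard /= addrC addKr.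
Qed.

Lemma prob_above_levels_gt n k w L : gamma * (B k w)%:R <= L ->
  fine (P (Theta n @^-1` (above_levels k w `&` ~` [set y | y <= L]))) = 1 - F L.
Proof.
case: k => [|k] le_L; first by rewrite above_levels0 setTI prob_Theta_gt.
rewrite above_levelsS -setCU.
have -> : [set y | y <= gamma * #|A k w|%:R] `|` [set y | y <= L] = [set y | y <= L].
  by apply/setUidPr => y /= le_y; apply: le_trans le_y le_L.
exact: prob_Theta_gt.
Qed.

Variable k : nat.

Definition same_path w0 : set T := [set w | forall i, (i <= k)%N -> A i w = A i w0].

Definition node_constraint w0 n : set R :=
  \bigcap_(i in [set i | (i < k)%N])
    if n \in A i w0 then setT
    else if n \in A i.+1 w0 then [set x | x <= gamma * #|A i w0|%:R]
    else ~` [set x | x <= gamma * #|A i w0|%:R].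

Lemma measurable_node_constraint w0 n : measurable (node_constraint w0 n).
Proof.
apply: bigcap_measurableType => i _ /=.
case: ifP => _; first exact: measurableT.
case: ifP => _; [|apply: measurableC]; exact: measurable_le.
Qed.

Lemma same_pathE w0 : same_path w0 = box Theta (node_constraint w0).
Proof.
apply/seteqP; split=> w /= same_w.
  move=> n i ik; rewrite -(same_w i.+1 ik) -(same_w i (ltnW ik)).
  case: ifP => nAi //; rewrite in_AsetS nAi /=.
  by case: ifP => //= /negbT/negP.
elim=> [_ | i IHi ik]; first by [].
apply/setP => n; rewrite in_AsetS IHi ?(ltnW ik) //.
have := same_w n i ik; case: ifP => [nAi _ | nAi /=].
  by rewrite (fintype.subsetP (Aset_subS i w0)).
by case: ifP => _ //= /negP/negbTE.
Qed.

Lemma node_constraint_notin w0 n : n \notin A k w0 ->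
  node_constraint w0 n = above_levels k w0.
Proof.
move=> nAk; have nA i : (i <= k)%N -> n \notin A i w0.
  by move=> ik; apply: contra nAk; apply/fintype.subsetP/Aset_mono.
apply/seteqP; split=> x /= cx i ik.
  have := cx i ik; rewrite /= (negbTE (nA i (ltnW ik))) (negbTE (nA i.+1 ik)) /=.
  by rewrite ltNge => /negP.
rewrite /= (negbTE (nA i (ltnW ik))) (negbTE (nA i.+1 ik)) /= => le_x.
by move: (cx i ik); rewrite ltNge le_x.
Qed.

Lemma history_same_path (h : nat -> nat * nat) w0 w :
  same_path w0 w ->
  history_event gamma Theta A0 k h w0 -> history_event gamma Theta A0 k h w.
Proof.
move=> same_w hist_w0 i ik; rewrite -hist_w0 //; case: i ik => [// | i] ik.
rewrite /Bcard /Dcard -[Bset _ _ _ _ w]/(A i w) -[Dset _ _ _ _ w]/(A i.+1 w :\: A i w).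
by rewrite (same_w i (ltnW ik)) (same_w i.+1 ik).
Qed.

Lemma next_on_pathE w0 l : [set w | D k.+1 w = l] `&` same_path w0 =
  box Theta (node_constraint w0) `&`
  [set w | #|[set n in ~: A k w0 | Theta n w \in [set x | x <= gamma * #|A k w0|%:R]]| = l].
Proof.
rewrite -same_pathE; apply/seteqP; split=> w [Dw same_w]; split=> //=.
  by rewrite -Dw Dcard_succ (same_w k (leqnn k)).
by rewrite Dcard_succ (Dw k (leqnn k)).
Qed.

Lemma prob_next_given_path w0 (j m l : nat) :
  B k w0 = j -> D k w0 = m -> F (gamma * j%:R) < 1 ->
  let p := (F (gamma * (j + m)%:R) - F (gamma * j%:R)) / (1 - F (gamma * j%:R)) in
  P ([set w | D k.+1 w = l] `&` same_path w0) =
  ((binomial_pmf (N - j - m) p l)%:E * P (same_path w0))%E.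
Proof.
move=> Bj Dm Fj_lt1 p; set L := gamma * #|A k w0|%:R.
have AkE : #|A k w0| = (j + m)%N by rewrite card_Aset Bj Dm.
have cardC : #|~: A k w0| = (N - j - m)%N.
  by rewrite cardsCs finset.setCK card_ord AkE subnDA.
have q_neq0 : 1 - F (gamma * j%:R) != 0 by rewrite subr_eq0 eq_sym lt_eqF.
have le_jL : gamma * (B k w0)%:R <= L by rewrite Bj /L ler_wpM2l // ler_nat AkE leq_addr.
rewrite next_on_pathE same_pathE -cardC.
apply: (prob_box_hits_binomial mTheta indepTheta (q := 1 - F (gamma * j%:R))).
- exact: measurable_node_constraint.
- exact: measurable_le.
- move=> n; rewrite inE => nAk.
  by rewrite node_constraint_notin // prob_above_levels_le // Bj /L AkE divfK.
- move=> n; rewrite inE => nAk.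
  rewrite node_constraint_notin // prob_above_levels_gt // mulrBl mul1r divfK //.
  by rewrite /L AkE opprB addrA subrK.
Qed.

Definition path_of w : {ffun 'I_k.+1 -> {set 'I_N}} := [ffun i : 'I_k.+1 => A i w].

Lemma path_ofE w0 : [set w | path_of w = path_of w0] = same_path w0.
Proof.
apply/seteqP; split=> w /= => [eq_w i ik | same_w].
  have := congr1 (fun f : {ffun _} => f (Ordinal (ik : (i < k.+1)%N))) eq_w.
  by rewrite !ffunE.
by apply/ffunP => i; rewrite !ffunE; apply: same_w (ltn_ord i).
Qed.

Lemma cond_prob_next_given_history (h : nat -> nat * nat) (j m l : nat) :
  (0 < P (history_event gamma Theta A0 k h))%E -> h k = (j, m) -> F (gamma * j%:R) < 1 ->
  let p := (F (gamma * (j + m)%:R) - F (gamma * j%:R)) / (1 - F (gamma * j%:R)) in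
  cond_prob P [set w | D k.+1 w = l] (history_event gamma Theta A0 k h) =
  binomial_pmf (N - j - m) p l.
Proof.
move=> H_pos hk Fj_lt1 p; set H := history_event gamma Theta A0 k h.
pose Y f := [set w | path_of w = f].
have disjY f f' : f != f' -> Y f `&` Y f' = set0.
  by move=> ff'; apply/seteqP; split=> // w [/= e e']; move: ff'; rewrite -e -e' eqxx.
have coverY w : exists f, Y f w by exists (path_of w).
have pieceE f : (exists2 w0, H w0 & H `&` Y f = same_path w0) \/ H `&` Y f = set0.
  have [[w0 [Yw0 Hw0]] | noH] := pselect (exists w0, Y f w0 /\ H w0); [left | right].
    exists w0 => //; rewrite /Y -Yw0 path_ofE; apply/seteqP; split=> [w [] // | w same_w].
    by split=> //; apply: history_same_path same_w Hw0.
  by apply/seteqP; split=> // w [Hw Yw]; apply: noH; exists w.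
have mpath w0 : measurable (same_path w0).
  by rewrite same_pathE; apply: measurable_box => // n; apply: measurable_node_constraint.
apply: (cond_prob_partition disjY coverY) => // f.
- by have [[w0 _ ->] | ->] := pieceE f.
- rewrite -setIA; have [[w0 _ ->] | ->] := pieceE f; last by rewrite setI0.
  rewrite next_on_pathE; apply: measurable_box_hits => // n.
  exact: measurable_node_constraint.
- rewrite -setIA; have [[w0 Hw0 ->] | ->] := pieceE f; last by rewrite setI0 measure0 mule0.
  have [Bj Dm] : B k w0 = j /\ D k w0 = m by have := Hw0 k (leqnn k); rewrite hk => -[].
  exact: prob_next_given_path.
Qed.

End Cascade.

Theorem mainTheorem8 (d : measure_display) (T : measurableType d) (R : realType)
  (P : probability T R) (N : nat) (Gamma : R) (F : R -> R)
  (Theta : 'I_N -> T -> R) (A0 : {set 'I_N}) :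
  (1 < N)%N ->
  0 < Gamma -> Gamma <= 1 ->
  continuous F -> F 0 = 0 ->
  (forall i, measurable_fun setT (Theta i)) ->
  mutually_independent P Theta ->
  (forall i (x : R), P [set w | Theta i w <= x] = (F x)%:E) ->
  A0 != finset.set0 ->
  let gamma := Gamma / (N - 1)%:R in
  (forall k w, Bcard gamma Theta A0 k.+1 w
                 = (Bcard gamma Theta A0 k w + Dcard gamma Theta A0 k w)%N) /\
  (forall (k : nat) (h : nat -> nat * nat) (j m l : nat),
     (0 < P (history_event gamma Theta A0 k h))%E ->
     h k = (j, m) ->
     F (gamma * j%:R) < 1 ->
     let p := (F (gamma * (j + m)%:R) - F (gamma * j%:R)) / (1 - F (gamma * j%:R)) in
     cond_prob P [set w | Dcard gamma Theta A0 k.+1 w = l]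
                 (history_event gamma Theta A0 k h)
     = 'C(N - j - m, l)%:R * p ^+ l * (1 - p) ^+ (N - j - m - l)).
Proof.
move=> _ Gamma_gt0 _ _ F0 mTheta indepTheta distF _ gamma.
split=> [k w | k h j m l H_pos hk Fj_lt1 p]; first exact: card_Aset.
have gamma_ge0 : 0 <= gamma by rewrite divr_ge0 // ltW.
by rewrite (cond_prob_next_given_history gamma_ge0 mTheta indepTheta distF F0 l H_pos hk Fj_lt1)
  binomial_pmfE.
Qed.
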